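(* For all integers $n\ge 1$ and $k\ge 2$, $$d_k(n+1)=d_{k-2}(n)+3\,d_{k-1}(n)+d_k(n)+2\,s_k(n).$$
   Context: For $n\ge 1$, the $2\times n$ board consists of $2n$ unit squares $x_0,\dots,x_{2n-1}$ arranged in 2 rows and $n$ columns, labeled with the top row first (left to right, $x_0,\dots,x_{n-1}$... ) — more precisely, labeled so that $x_{2i}$ and $x_{2i+1}$ form column $i$ ($i=0,\dots,n-1$), with $x_{2n-2},x_{2n-1}$ the two squares of the rightmost column. Two squares are adjacent iff they share an edge. A piece is a nonempty set of squares that is connected under adjacency. A division of the board into $k$ pieces is a partition of the set of all $2n$ squares into exactly $k$ pieces. $d_k(n)$ denotes the number of divisions of the $2\times n$ board into $k$ pieces (so $d_0(n)=0$, $d_1(n)=1$). $s_k(n)$ denotes the number of such divisions in which the two squares of the rightmost column lie in different pieces. *)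

From mathcomp Require Import all_boot.
Unset Implicit Arguments. Unset Printing Implicit Defensive.

(* Squares of the 2 x n board: 'I_(2*n).  Square j lies in column j %/ 2
   and row j %% 2, so x_(2i), x_(2i+1) form column i. *)
Definition square (n : nat) := 'I_(2 * n).

Definition adj (n : nat) (x y : square n) : bool :=
  ((x %/ 2 == y %/ 2) && (x %% 2 != y %% 2))
  || ((x %% 2 == y %% 2) && ((x %/ 2 == (y %/ 2).+1) || (y %/ 2 == (x %/ 2).+1))).

Definition piece (n : nat) (A : {set square n}) : bool :=
  (A != set0) &&
  [forall x in A, forall y in A,
     connect [rel u v | [&& u \in A, v \in A & adj n u v]] x y].

Definition division (n k : nat) (P : {set {set square n}}) : bool :=
  [&& partition P [set: square n], [forall A in P, piece n A] & #|P| == k].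

Definition d (k n : nat) : nat := #|[set P | division n k P]|.

Definition rightmost_split (n : nat) (P : {set {set square n}}) : bool :=
  [forall A in P, forall x : square n, forall y : square n,
     ((val x == (2 * n - 2)%N) && (val y == (2 * n - 1)%N)) ==>
       ~~ ((x \in A) && (y \in A))].

Definition s (k n : nat) : nat :=
  #|[set P | division n k P && rightmost_split n P]|.

From mathcomp Require Import all_boot zify.
Set Implicit Arguments. Unset Strict Implicit.

(* A division P of the 2 x (n+1) board restricts to a division [res P] of the
   2 x n board (restriction keeps pieces connected because the new column
   {u, v} meets the old board only at the last old column {p, q}, whose two
   squares are adjacent).  The way the new column is glued to the old board is
   recorded by a triple of booleans, the [kind] of P.  Conversely a division Q
   of the old board together with an [admissible] kind determines a unique
   extension [ext Q a b c], whose number of pieces is that of Q plus the number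
   [new_pieces a b c] of pieces lying inside the new column.  So for each kind
   the divisions of that kind are counted by divisions of the old board
   ([card_kind]), and summing over the eight kinds gives the recurrence. *)

Section Connectivity.
Variable X : finType.
Implicit Types (e : rel X) (A D S : {set X}).

Definition induced e A : rel X := [rel x y | [&& x \in A, y \in A & e x y]].

Definition connected e A :=
  [forall x in A, forall y in A, connect (induced e A) x y].

Lemma connect_stable e (G : X -> Prop) x y :
  G x -> (forall a b, G a -> e a b -> G b) -> connect e x y -> G y.
Proof.
move=> Gx step /connectP[s + ->]; elim: s x Gx => [|z s IH] x Gx //=.
by case/andP=> exz; apply: IH; apply: step exz.
Qed.

Lemma connected_root e A r : symmetric e -> r \in A ->
  (forall z, z \in A -> connect (induced e A) z r) -> connected e A.
Proof.
move=> sym_e rA to_r; apply/forall_inP=> x xA; apply/forall_inP=> y yA.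
have sym_conn : connect_sym (induced e A).
  by apply: sym_connect_sym => a b; rewrite /induced /= sym_e andbCA.
by apply: connect_trans (to_r x xA) _; rewrite sym_conn; apply: to_r.
Qed.

Lemma connected_sub e A S z : connected e A -> z \in A -> z \in S ->
  (forall a b, a \in S -> a \in A -> b \in A -> e a b -> b \in S) -> A \subset S.
Proof.
move=> /forall_inP connA zA zS closedS; apply/subsetP=> y yA.
have /forall_inP/(_ y yA) := connA z zA.
apply: (connect_stable (G := fun x => x \in S)) => // a b aS /and3P[aA bA].
exact: closedS.
Qed.

(* Deleting D from a connected set keeps it connected, provided the points
   outside D that touch D are pairwise equal or adjacent: every detour of a
   path through D can then be short-cut. *)
Lemma connected_delete e A D :
  (forall a b d d', a \notin D -> b \notin D -> d \in D -> d' \in D ->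
     e a d -> e d' b -> (a == b) || e a b) ->
  connected e A -> connected e (A :\: D).
Proof.
move=> shortcut /forall_inP connA.
apply/forall_inP=> x /setDP[xA xD]; apply/forall_inP=> y /setDP[yA yD].
pose reach z := connect (induced e (A :\: D)) x z.
(* Along a path from x inside A, points outside D stay reachable inside A \ D,
   and points of D are entered from such a reachable point. *)
pose G z := if z \in D then exists2 t, t \in A :\: D & reach t /\ exists2 d, d \in D & e t d
            else reach z.
suff : G y by rewrite /G (negbTE yD).
have /forall_inP/(_ y yA) := connA x xA.
apply: (connect_stable (G := G)); first by rewrite /G (negbTE xD) /reach connect0.
move=> s t + /and3P[sA tA est]; rewrite /G.
case: ifP => sD; case: ifP => tD.
- by [].
- case=> r rAD [reach_r [d dD erd]]; move/setDP: rAD => [rA rD].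
  have /orP[/eqP <- // | ert] := shortcut r t d s rD (negbT tD) dD sD erd est.
  by apply: connect_trans reach_r (connect1 _); rewrite /induced /= !inE rA tA rD tD.
- by move=> reach_s; exists s; rewrite ?inE ?sD ?sA //; split => //; exists t.
- move=> reach_s; apply: connect_trans reach_s (connect1 _).
  by rewrite /induced /= !inE sD tD sA tA.
Qed.

End Connectivity.

Lemma connect_transfer (X Y : finType) (e : rel X) (e' : rel Y) (f : X -> Y)
    (A : {set X}) (B : {set Y}) x y :
  {in A &, forall a b, e a b -> e' (f a) (f b)} -> {in A, forall a, f a \in B} ->
  connect (induced e A) x y -> connect (induced e' B) (f x) (f y).
Proof.
move=> fe fAB; apply: (connect_stable (G := fun z => connect (induced e' B) (f x) (f z))).
  exact: connect0.
move=> a b reach_a /and3P[aA bA eab]; apply: connect_trans reach_a (connect1 _).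
by rewrite /induced /= !fAB // fe.
Qed.

Section Partitions.
Variable X : finType.

Section WholePartition.
Variable P : {set {set X}}.
Hypothesis partP : partition P [set: X].

Lemma in_cover x : x \in cover P.
Proof. by case/and3P: partP => /eqP -> _ _; rewrite inE. Qed.

Lemma mem_pblockT x : x \in pblock P x.
Proof. by rewrite mem_pblock in_cover. Qed.

Lemma pblockT_mem x : pblock P x \in P.
Proof. exact/pblock_mem/in_cover. Qed.

Lemma eq_pblockT x y : (pblock P x == pblock P y) = (y \in pblock P x).
Proof. by rewrite eq_pblock ?(partition_trivIset partP) ?in_cover. Qed.

Lemma same_pblockT x y : y \in pblock P x -> pblock P y = pblock P x.
Proof. exact/same_pblock/(partition_trivIset partP). Qed.

Lemma pblockT_sym x y : (y \in pblock P x) = (x \in pblock P y).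
Proof. by rewrite -!eq_pblockT eq_sym. Qed.

Lemma pblocksT : [set pblock P x | x in [set: X]] = P.
Proof.
apply/setP=> B; apply/imsetP/idP=> [[x _ ->]|PB]; first exact: pblockT_mem.
have /set0Pn[x xB] := partition_neq0 partP PB.
by exists x => //; rewrite (def_pblock (partition_trivIset partP) PB xB).
Qed.

End WholePartition.

Lemma mem_pblock_preim (Y : eqType) (f : X -> Y) x y :
  (y \in pblock (preim_partition f [set: X]) x) = (f x == f y).
Proof.
rewrite pblock_equivalence_partition // => a b c _ _ _.
by split=> // /eqP ->.
Qed.

Lemma preim_partition_eq (Y Y' : eqType) (f : X -> Y) (g : X -> Y') :
  (forall x y, (f x == f y) = (g x == g y)) ->
  preim_partition f [set: X] = preim_partition g [set: X].
Proof.
move=> same_levels; apply: eq_imset => x; apply/setP=> y.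
by rewrite !inE same_levels.
Qed.

Lemma card_preim_partition (Y : finType) (f : X -> Y) :
  #|preim_partition f [set: X]| = #|f @: [set: X]|.
Proof.
pose level c := [set y in [set: X] | c == f y].
have -> : preim_partition f [set: X] = level @: (f @: [set: X]).
  by rewrite -imset_comp.
apply: card_in_imset => _ _ /imsetP[x1 _ ->] /imsetP[x2 _ ->] same.
have : x1 \in level (f x1) by rewrite !inE eqxx.
by rewrite same !inE => /eqP.
Qed.

End Partitions.

Lemma card_bij (X Y : finType) (A : {set X}) (B : {set Y}) (f : X -> Y) (g : Y -> X) :
  {in A, forall x, f x \in B /\ g (f x) = x} ->
  {in B, forall y, g y \in A /\ f (g y) = y} -> #|A| = #|B|.
Proof.
move=> fA gB; have <- : f @: A = B.
  apply/setP=> y; apply/imsetP/idP => [[x xA ->]|yB]; first by case: (fA x xA).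
  by case: (gB y yB) => gyA fgy; exists (g y).
apply/esym/card_in_imset => x1 x2 x1A x2A same.
by case: (fA x1 x1A) => _ <-; case: (fA x2 x2A) => _ <-; rewrite same.
Qed.

Lemma card_split_bool3 (X : finType) (A : {set X}) (f : X -> bool * bool * bool) :
  #|A| = \sum_(a : bool) \sum_(b : bool) \sum_(c : bool)
           #|[set x in A | f x == (a, b, c)]|.
Proof.
rewrite pair_bigA pair_bigA /= -sum1_card (partition_big f xpredT) //=.
apply: eq_bigr => [[[a b] c]] _ /=.
by rewrite -sum1_card; apply: eq_bigl => x; rewrite !inE.
Qed.

Lemma adjE m (x y : square m) : adj m x y =
  [|| ((x : nat).+1 == y) && (x %% 2 == 0), ((y : nat).+1 == x) && (y %% 2 == 0),
      (x : nat).+2 == y | (y : nat).+2 == x].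
Proof. by rewrite /adj; apply/idP/idP; [case/orP=> /andP[/eqP ? ?] | ]; lia. Qed.

Lemma adj_sym m : symmetric (adj m).
Proof. by move=> x y; rewrite !adjE; apply/idP/idP; lia. Qed.

Lemma pieceE m (A : {set square m}) : piece m A = (A != set0) && connected (adj m) A.
Proof. by []. Qed.

(* From now on n >= 1 is fixed; the board with n + 1 columns is the board with
   n columns (embedded by [embed]) followed by a new column {u, v}, u above v. *)
Section Board.
Variable n : nat.
Hypothesis n_gt0 : 0 < n.

Local Notation T := (square n).
Local Notation T' := (square n.+1).

(* u = x_(2n), v = x_(2n+1), p = x_(2n-2), q = x_(2n-1); [unembed] is a left
   inverse of the embedding (with junk value p on the new column). *)
Definition embed (x : T) : T' := @widen_ord (2 * n) (2 * n.+1) ltac:(lia) x.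
Definition u : T' := @Ordinal (2 * n.+1) (2 * n) ltac:(lia).
Definition v : T' := @Ordinal (2 * n.+1) (2 * n).+1 ltac:(lia).
Definition p : T := @Ordinal (2 * n) (2 * n - 2) ltac:(lia).
Definition q : T := @Ordinal (2 * n) (2 * n - 1) ltac:(lia).
Definition unembed (z : T') : T := insubd p (val z).

Lemma embedK : cancel embed unembed.
Proof. by move=> x; apply: val_inj; rewrite /unembed insubdK //=; apply: ltn_ord. Qed.

Lemma embed_inj : injective embed.
Proof. exact: can_inj embedK. Qed.

Lemma embed_neq_u x : (embed x == u) = false.
Proof. by apply/negbTE/eqP => /(congr1 val) /=; have := ltn_ord x; lia. Qed.

Lemma embed_neq_v x : (embed x == v) = false.
Proof. by apply/negbTE/eqP => /(congr1 val) /=; have := ltn_ord x; lia. Qed.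

Lemma v_neq_u : (v == u) = false.
Proof. by apply/negbTE/eqP => /(congr1 val) /=; lia. Qed.

Lemma embed_notin_uv x : embed x \in [set u; v] = false.
Proof. by rewrite !inE embed_neq_u embed_neq_v. Qed.

Variant square_spec : T' -> Type :=
  | SquareU : square_spec u
  | SquareV : square_spec v
  | SquareOld x : square_spec (embed x).

Lemma squareP z : square_spec z.
Proof.
have [old | new] := ltnP z (2 * n).
  have -> : z = embed (Ordinal old) by apply: val_inj.
  exact: SquareOld.
have [top | bot] := eqVneq (z : nat) (2 * n).
  have -> : z = u by apply: val_inj.
  exact: SquareU.
have -> : z = v by apply: val_inj => /=; have := ltn_ord z; lia.
exact: SquareV.
Qed.

Lemma adj_embed x y : adj n.+1 (embed x) (embed y) = adj n x y.
Proof. by []. Qed.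

Lemma adj_embed_u x : adj n.+1 (embed x) u = (x == p).
Proof. by rewrite adjE -(inj_eq val_inj) /=; apply/idP/idP; have := ltn_ord x; lia. Qed.

Lemma adj_embed_v x : adj n.+1 (embed x) v = (x == q).
Proof. by rewrite adjE -(inj_eq val_inj) /=; apply/idP/idP; have := ltn_ord x; lia. Qed.

Lemma adj_uv : adj n.+1 u v.
Proof. by rewrite adjE /=; lia. Qed.

Lemma adj_pq : adj n p q.
Proof. by rewrite adjE /=; lia. Qed.

Lemma connected_new (B : {set T'}) : B \subset [set u; v] -> connected (adj n.+1) B.
Proof.
move=> /subsetP sub; apply/forall_inP=> y yB; apply/forall_inP=> z zB.
have [->|yz] := eqVneq y z; first exact: connect0.
apply: connect1; rewrite /induced /= yB zB /=.
by move: (sub y yB) (sub z zB) yz; rewrite !inE => /orP[]/eqP-> /orP[]/eqP->;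
   rewrite ?eqxx // ?[adj _ v u]adj_sym adj_uv.
Qed.

(* A connected set containing a square of the new column stays inside it when
   it does not use the edges u - embed p (if it contains u) and v - embed q
   (if it contains v), the only edges leaving the new column. *)
Lemma connected_in_new (B : {set T'}) z :
  connected (adj n.+1) B -> z \in B -> z \in [set u; v] ->
  (u \in B -> embed p \notin B) -> (v \in B -> embed q \notin B) ->
  B \subset [set u; v].
Proof.
move=> connB zB zN up_out down_out; apply: (connected_sub connB zB zN).
move=> s t; rewrite !inE => /orP[]/eqP-> sB; case: (squareP t);
  rewrite ?eqxx ?orbT // => x xB; rewrite adj_sym ?adj_embed_u ?adj_embed_v => /eqP xE.
- by have := up_out sB; rewrite -xE xB.
- by have := down_out sB; rewrite -xE xB.
Qed.

Lemma unembedK z : z \notin [set u; v] -> embed (unembed z) = z.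
Proof. by case: (squareP z) => [||x]; rewrite ?embedK // !inE eqxx ?orbT. Qed.

Lemma touch_new z d : z \notin [set u; v] -> d \in [set u; v] -> adj n.+1 z d ->
  (z == embed p) || (z == embed q).
Proof.
case: (squareP z) => [||x]; rewrite ?inE ?eqxx ?orbT // => _.
by rewrite !(inj_eq embed_inj) => /orP[]/eqP->;
  rewrite ?adj_embed_u ?adj_embed_v => ->; rewrite ?orbT.
Qed.

Definition lower (B : {set T'}) : {set T} := [set x | embed x \in B].

(* Restriction preserves connectivity: a path leaving the old board through the
   new column leaves and re-enters at p or q, which are adjacent. *)
Lemma lower_connected B : connected (adj n.+1) B -> connected (adj n) (lower B).
Proof.
move=> connB.
have connBold : connected (adj n.+1) (B :\: [set u; v]).
  apply: connected_delete connB => a b d d' aN bN dD d'D ad d'b.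
  rewrite adj_sym in d'b.
  by case/orP: (touch_new aN dD ad) => /eqP->; case/orP: (touch_new bN d'D d'b) => /eqP->;
    rewrite ?eqxx ?adj_embed ?adj_pq ?orbT // adj_sym adj_pq orbT.
have old_in x : x \in lower B -> embed x \in B :\: [set u; v].
  by rewrite !inE embed_neq_u embed_neq_v.
apply/forall_inP=> x xB; apply/forall_inP=> y yB; rewrite -(embedK x) -(embedK y).
apply: (connect_transfer (e := adj n.+1)); last first.
  exact: (forall_inP (forall_inP connBold _ (old_in _ xB)) _ (old_in _ yB)).
- by move=> z /setDP[zB zN]; rewrite inE unembedK.
- by move=> a b /setDP[_ aN] /setDP[_ bN]; rewrite -adj_embed !unembedK.
Qed.

Lemma lower_new (B : {set T'}) : B \subset [set u; v] -> lower B = set0.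
Proof.
move=> /subsetP sub; apply/setP=> x; rewrite !inE.
by apply/negP => /sub; rewrite embed_notin_uv.
Qed.

Definition res (P : {set {set T'}}) : {set {set T}} :=
  preim_partition (fun x => lower (pblock P (embed x))) [set: T].

Section Restriction.
Variable P : {set {set T'}}.
Hypothesis partP : partition P [set: T'].
Hypothesis piecesP : {in P, forall B, piece n.+1 B}.

Lemma pblock_res x : pblock (res P) x = lower (pblock P (embed x)).
Proof.
apply/setP=> y; rewrite mem_pblock_preim [RHS]inE; apply/eqP/idP => [same | yx].
  have : y \in lower (pblock P (embed x)) by rewrite same inE mem_pblockT.
  by rewrite inE.
by rewrite (same_pblockT partP yx).
Qed.

Lemma res_partition : partition (res P) [set: T].
Proof. exact: preim_partitionP. Qed.

Lemma res_piece A : A \in res P -> piece n A.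
Proof.
rewrite -(pblocksT res_partition) => /imsetP[x _ ->].
rewrite pieceE pblock_res; apply/andP; split.
  by apply/set0Pn; exists x; rewrite inE mem_pblockT.
by apply: lower_connected; have /andP[] := piecesP (pblockT_mem partP (embed x)).
Qed.

End Restriction.

(* The kind of a division P of the larger board records how its new column is
   attached: a = [joins_up P] (u shares the piece of embed p), c =
   [column_joined P] (u and v share a piece), and b = [joins_down P] (v shares
   the piece of embed q, unless this already follows from a and c). *)
Definition joins_up (P : {set {set T'}}) := embed p \in pblock P u.
Definition column_joined (P : {set {set T'}}) := v \in pblock P u.
Definition joins_down (P : {set {set T'}}) :=
  (embed q \in pblock P v) && ~~ (joins_up P && column_joined P).
Definition kind (P : {set {set T'}}) := (joins_up P, joins_down P, column_joined P).

(* The kinds that can occur above a division Q of the old board: never all three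
   flags, and if p and q share a piece of Q, b forces a = c (otherwise u and v
   would be joined through that piece against c, or u to p's piece against a). *)
Definition admissible (Q : {set {set T}}) (a b c : bool) :=
  ~~ [&& a, b & c] && ~~ [&& q \in pblock Q p, b & a != c].

Definition new_pieces (a b c : bool) : nat :=
  match a, b, c with
  | false, false, false => 2
  | true, false, false | false, true, false | false, false, true => 1
  | _, _, _ => 0
  end.

Section Extension.
Variables (Q : {set {set T}}) (a b c : bool).
Hypothesis partQ : partition Q [set: T].

(* The old square whose piece a square of the larger board joins, if any. *)
Definition anchor (z : T') : option T :=
  if z == u then (if a then Some p else if c && b then Some q else None)
  else if z == v then (if b then Some q else if c && a then Some p else None)
  else Some (unembed z).

(* Squares with the same label form a piece of the extension; the unanchored
   squares of the new column get a tag, shared by u and v exactly when c. *)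
Definition label (z : T') : {set T} + bool :=
  if anchor z is Some x then inl (pblock Q x) else inr ((z == u) || c).

Definition ext : {set {set T'}} := preim_partition label [set: T'].

Lemma anchor_embed x : anchor (embed x) = Some x.
Proof. by rewrite /anchor embed_neq_u embed_neq_v embedK. Qed.

Lemma label_embed x : label (embed x) = inl (pblock Q x).
Proof. by rewrite /label anchor_embed. Qed.

Lemma mem_ext z y : (y \in pblock ext z) = (label z == label y).
Proof. exact: mem_pblock_preim. Qed.

Lemma ext_partition : partition ext [set: T'].
Proof. exact: preim_partitionP. Qed.

Lemma lower_ext x : lower (pblock ext (embed x)) = pblock Q x.
Proof.
apply/setP=> y; rewrite inE mem_ext !label_embed.
by apply/eqP/idP => [[->] | /(same_pblockT partQ) ->]; rewrite ?mem_pblockT.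
Qed.

Lemma res_ext : res ext = Q.
Proof.
rewrite /res -[RHS](preim_partition_pblock partQ); apply: preim_partition_eq => x y.
by rewrite !lower_ext.
Qed.

Lemma card_ext : #|ext| = #|Q| + new_pieces a b c.
Proof.
pose old := [set inl A | A in Q] : {set {set T} + bool}.
have card_old : #|old| = #|Q| by apply: card_imset => A B [].
have in_old l : (l \in old) = if l is inl A then A \in Q else false.
  apply/imsetP/idP => [[A AQ ->] // | ]; case: l => // A AQ; by exists A.
have labels : label @: [set: T'] = label u |: (label v |: old).
  apply/setP=> l; apply/imsetP/idP => [[z _ ->] | ].
    case: (squareP z) => [||x]; rewrite !inE ?eqxx ?orbT // label_embed.
    by rewrite in_old pblockT_mem ?orbT.
  rewrite !inE in_old => /or3P[/eqP-> | /eqP-> | ]; [by exists u | by exists v | ].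
  case: l => // A; rewrite -(pblocksT partQ) => /imsetP[x _ ->].
  by exists (embed x); rewrite ?label_embed.
rewrite /ext card_preim_partition labels !cardsU1 card_old !inE !in_old.
rewrite /label /anchor eqxx v_neq_u eqxx.
by case: a; case: b; case: c; rewrite /= ?(pblockT_mem partQ) ?orbT /=; lia.
Qed.

Lemma kind_ext : admissible Q a b c -> kind ext = (a, b, c).
Proof.
rewrite /admissible /kind /joins_down /joins_up /column_joined !mem_ext !label_embed.
rewrite /label /anchor eqxx v_neq_u eqxx.
have pq_block : (pblock Q p == pblock Q q) = (q \in pblock Q p) by rewrite eq_pblockT.
have qp_block : (pblock Q q == pblock Q p) = (q \in pblock Q p) by rewrite eq_sym pq_block.
by case: a; case: b; case: c; rewrite /= ?(inj_eq inl_inj) ?pq_block ?qp_block ?eqxx //=;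
  case: (q \in pblock Q p).
Qed.

Hypothesis piecesQ : {in Q, forall A, piece n A}.

Definition level (l : {set T} + bool) : {set T'} := [set y | l == label y].

Lemma level_anchor z x : anchor z = Some x -> z \in level (inl (pblock Q x)).
Proof. by rewrite inE /label => ->. Qed.

Lemma old_path x y : y \in pblock Q x ->
  connect (induced (adj n.+1) (level (inl (pblock Q x)))) (embed y) (embed x).
Proof.
move=> yx; have /andP[_ /forall_inP connQ] := piecesQ (pblockT_mem partQ x).
have /forall_inP/(_ x (mem_pblockT partQ x)) := connQ y yx.
apply: connect_transfer => [s t _ _ | s sx]; first by rewrite adj_embed.
by rewrite inE label_embed (same_pblockT partQ sx).
Qed.

(* A square is joined to its anchor inside its level: u to embed p directly or
   through v to embed q, and symmetrically for v. *)
Lemma anchor_path z x : anchor z = Some x ->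
  connect (induced (adj n.+1) (level (inl (pblock Q x)))) z (embed x).
Proof.
have edge (L : {set T'}) s t :
    s \in L -> t \in L -> adj n.+1 s t -> connect (induced (adj n.+1) L) s t.
  by move=> sL tL st; apply: connect1; rewrite /induced /= sL tL.
have embedL y : embed y \in level (inl (pblock Q y)) by rewrite inE label_embed.
move=> zx; move: zx (level_anchor zx).
case: (squareP z) => [||y]; rewrite /anchor ?eqxx ?v_neq_u ?embed_neq_u ?embed_neq_v.
- case: ifP => [_ [<-] uL | _]; first by apply: edge; rewrite // adj_sym adj_embed_u.
  case: ifP => // /andP[_ bb] [<-] uL.
  have vL : v \in level (inl (pblock Q q)).
    by apply: level_anchor; rewrite /anchor v_neq_u eqxx bb.
  apply: connect_trans (edge _ _ _ uL vL adj_uv) (edge _ _ _ vL (embedL q) _).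
  by rewrite adj_sym adj_embed_v.
- case: ifP => [_ [<-] vL | _]; first by apply: edge; rewrite // adj_sym adj_embed_v.
  case: ifP => // /andP[_ aa] [<-] vL.
  have uL : u \in level (inl (pblock Q p)) by apply: level_anchor; rewrite /anchor eqxx aa.
  apply: connect_trans (edge _ _ _ vL uL _) (edge _ _ _ uL (embedL p) _).
    by rewrite adj_sym adj_uv.
  by rewrite adj_sym adj_embed_u.
- by rewrite embedK => -[<-] _; apply: connect0.
Qed.

Lemma level_inl_connected x : connected (adj n.+1) (level (inl (pblock Q x))).
Proof.
apply: (connected_root (@adj_sym _) (r := embed x)); first by rewrite inE label_embed.
move=> z; rewrite inE /label; case zy: (anchor z) => [y|] // /eqP[same].
have yx : y \in pblock Q x by rewrite same mem_pblockT.
by apply: connect_trans (old_path yx); rewrite same; apply: anchor_path.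
Qed.

Lemma level_inr_new t : level (inr t) \subset [set u; v].
Proof.
by apply/subsetP=> z; case: (squareP z) => [||x]; rewrite !inE ?eqxx ?orbT // label_embed.
Qed.

Lemma ext_piece A : A \in ext -> piece n.+1 A.
Proof.
case/imsetP=> z _ ->.
have -> : [set y in [set: T'] | label z == label y] = level (label z).
  by apply/setP=> y; rewrite !inE.
rewrite pieceE; apply/andP; split; first by apply/set0Pn; exists z; rewrite inE.
rewrite /label; case: (anchor z) => [x|]; first exact: level_inl_connected.
exact/connected_new/level_inr_new.
Qed.

End Extension.

Section Decoding.
Variable P : {set {set T'}}.
Hypothesis partP : partition P [set: T'].
Hypothesis piecesP : {in P, forall B, piece n.+1 B}.

Local Notation a := (joins_up P).
Local Notation b := (joins_down P).
Local Notation c := (column_joined P).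
Local Notation anchorP := (anchor a b c).

Lemma connected_pblock z : connected (adj n.+1) (pblock P z).
Proof. by have /andP[] := piecesP (pblockT_mem partP z). Qed.

Lemma anchor_in z x : anchorP z = Some x -> embed x \in pblock P z.
Proof.
case: (squareP z) => [||y]; rewrite /anchor ?eqxx ?v_neq_u ?embed_neq_u ?embed_neq_v.
- case: ifP => [up [<-] // | _]; case: ifP => // /andP[col /andP[down _]] [<-].
  by rewrite -(same_pblockT partP col).
- case: ifP => [/andP[down _] [<-] // | _]; case: ifP => // /andP[col up] [<-].
  by rewrite (same_pblockT partP col).
- by rewrite embedK => -[<-]; apply: mem_pblockT.
Qed.

Lemma unanchored_new z : anchorP z = None -> pblock P z \subset [set u; v].
Proof.
case: (squareP z) => [||y]; rewrite /anchor ?eqxx ?v_neq_u ?embed_neq_u ?embed_neq_v //.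
- case: ifP => // no_up; case: ifP => // no_down _.
  apply: connected_in_new (connected_pblock u) (mem_pblockT partP u) _ _ _.
  + by rewrite !inE eqxx.
  + by move=> _; apply/negbT: no_up.
  move=> col; rewrite -(same_pblockT partP col); apply/negP => down.
  by move: no_down; rewrite /joins_down no_up /column_joined col down.
- case: ifP => // no_down; case: ifP => // no_up_col _.
  have no_up : column_joined P -> joins_up P = false.
    by move=> col; move: no_up_col; rewrite col.
  apply: connected_in_new (connected_pblock v) (mem_pblockT partP v) _ _ _.
  + by rewrite !inE eqxx orbT.
  + move=> uv; have col : column_joined P by rewrite /column_joined pblockT_sym.
    by rewrite (same_pblockT partP col); apply/negbT: (no_up col).
  move=> _; apply/negP => down; move: no_down; rewrite /joins_down down /=.
  by case col: (column_joined P); rewrite ?andbT ?andbF ?no_up.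
Qed.

Definition decode (B : {set T'}) : {set T} + bool :=
  if lower B != set0 then inl (lower B) else inr (u \in B).

Lemma label_res z : label (res P) a b c z = decode (pblock P z).
Proof.
rewrite /label; case zx: (anchorP z) => [x|].
  have xz := anchor_in zx.
  rewrite (pblock_res partP) (same_pblockT partP xz) /decode ifT //.
  by apply/set0Pn; exists x; rewrite inE.
rewrite /decode (lower_new (unanchored_new zx)) eqxx /=; congr inr.
move: zx; case: (squareP z) => [||y]; rewrite ?mem_pblockT ?eqxx //.
  by rewrite v_neq_u /= pblockT_sym.
by rewrite anchor_embed.
Qed.

(* Distinct pieces decode differently: a piece meeting the old board is
   determined by its restriction, and the others are {u}, {v} or {u, v}. *)
Lemma decode_inj z y :
  decode (pblock P z) = decode (pblock P y) -> pblock P z = pblock P y.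
Proof.
have new_sq s : lower (pblock P s) = set0 -> s = u \/ s = v.
  case: (squareP s) => [||x]; [by left | by right | ].
  by move/setP/(_ x); rewrite !inE mem_pblockT.
rewrite /decode; case: ifPn => [/set0Pn[x xz] | /negPn/eqP low_z];
  case: ifPn => [_ | /negPn/eqP low_y] // [same].
  have : x \in lower (pblock P y) by rewrite -same.
  move: xz; rewrite !inE => xz xy.
  by rewrite -(same_pblockT partP xz) -(same_pblockT partP xy).
move: same; have [-> | ->] := new_sq _ low_z; have [-> | ->] := new_sq _ low_y => //.
  by rewrite (mem_pblockT partP u) => /esym/(same_pblockT partP).
by rewrite (mem_pblockT partP u) => /(same_pblockT partP).
Qed.

Lemma ext_res : ext (res P) a b c = P.
Proof.
rewrite /ext -[RHS](preim_partition_pblock partP).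
apply: preim_partition_eq => z y; rewrite !label_res.
by apply/eqP/eqP => [/decode_inj | ->].
Qed.

Lemma admissible_res : admissible (res P) a b c.
Proof.
rewrite /admissible (pblock_res partP) inE; apply/andP; split.
  by rewrite /joins_down; case: (joins_up P); case: (column_joined P); rewrite ?andbF.
apply/negP => /and3P[pq /andP[down _] up_col].
have pv : pblock P (embed p) = pblock P v.
  by rewrite -(same_pblockT partP pq) (same_pblockT partP down).
by move: up_col; rewrite /joins_up /column_joined -!(eq_pblockT partP) pv eqxx.
Qed.

End Decoding.

Lemma card_kind k a b c : 2 <= k ->
  #|[set P in [set P | division n.+1 k P] | kind P == (a, b, c)]| =
  #|[set Q | division n (k - new_pieces a b c) Q & admissible Q a b c]|.
Proof.
move=> k_ge2; have new_le : new_pieces a b c <= k by case: a; case: b; case: c => /=; lia.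
apply: (card_bij (f := res) (g := fun Q => ext Q a b c)).
- move=> P; rewrite !inE => /andP[/and3P[partP /forall_inP piecesP /eqP cardP] /eqP kindP].
  case: kindP => <- <- <-.
  rewrite (ext_res partP piecesP); split => //.
  rewrite /division (admissible_res partP) (res_partition P) andbT /=.
  apply/andP; split; first by apply/forall_inP => A; apply: res_piece.
  have := card_ext (joins_up P) (joins_down P) (column_joined P) (res_partition P).
  by rewrite (ext_res partP piecesP) cardP => ->; rewrite addnK.
- move=> Q; rewrite !inE => /andP[/and3P[partQ /forall_inP piecesQ /eqP cardQ] adm].
  rewrite (res_ext _ _ _ partQ); split => //.
  rewrite /division ext_partition (kind_ext partQ adm) eqxx andbT /=.
  apply/andP; split; first by apply/forall_inP => A; apply: ext_piece.
  by rewrite (card_ext _ _ _ partQ) cardQ subnK.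
Qed.

Lemma rightmost_splitE (Q : {set {set T}}) : partition Q [set: T] ->
  rightmost_split n Q = (q \notin pblock Q p).
Proof.
move=> partQ; apply/idP/idP.
  move/forall_inP/(_ _ (pblockT_mem partQ p))/forallP/(_ p)/forallP/(_ q).
  by rewrite !eqxx /= (mem_pblockT partQ p).
move=> split_pq; apply/forall_inP => A AQ; apply/forallP => x; apply/forallP => y.
apply/implyP => /andP[/eqP xp /eqP yq].
have -> : x = p by apply: val_inj.
have -> : y = q by apply: val_inj.
apply/negP => /andP[pA qA].
by rewrite (def_pblock (partition_trivIset partQ) AQ pA) qA in split_pq.
Qed.

Lemma card_admissible j a b c :
  #|[set Q | division n j Q & admissible Q a b c]| =
  if [&& a, b & c] then 0
  else if b && (a != c) then #|[set Q | division n j Q & rightmost_split n Q]|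
  else #|[set Q | division n j Q]|.
Proof.
rewrite /admissible; case: ifP => _.
  by apply/eqP; rewrite cards_eq0; apply/eqP/setP=> Q; rewrite !inE /= andbF.
case: ifP => _; apply: eq_card => Q; rewrite !inE /=;
  case dQ: (division n j Q) => //=; have [partQ _ _] := and3P dQ.
  by rewrite (rightmost_splitE partQ) andbT.
by rewrite andbF.
Qed.

(* Summing over the kinds: (0,0,0) gives d (k-2); the three kinds with one flag
   give d (k-1); (1,0,1) gives d k; (1,1,0) and (0,1,1) give s k each; (1,1,1)
   never occurs. *)
Lemma recurrence k : 2 <= k ->
  d k n.+1 = (d (k - 2) n + 3 * d (k - 1) n + d k n + 2 * s k n)%N.
Proof.
move=> k_ge2; rewrite /d (card_split_bool3 _ kind) !big_bool /= !card_kind //=.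
rewrite !card_admissible /= !subn0 /s.
set s0 := #|[set Q | division n k Q & rightmost_split n Q]|.
set d0 := #|[set Q | division n k Q]|.
set d1 := #|[set Q | division n (k - 1) Q]|.
set d2 := #|[set Q | division n (k - 2) Q]|.
lia.
Qed.

End Board.

Unset Implicit Arguments.

Theorem theorem1 (n k : nat) :
  1 <= n -> 2 <= k ->
  d k n.+1 = (d (k - 2) n + 3 * d (k - 1) n + d k n + 2 * s k n)%N.
Proof. by move=> n_gt0; apply: recurrence. Qed.
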